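(* Let $(Y,\rho)$ be a metric space, let $\hookrightarrow_*$ be a monotone embedding relation on the subsets of $Y$, let $X$ be a paracompact space, and let $\varphi:X\rightrightarrows Y$ be a $\rho$-continuous set-valued mapping such that each $\varphi(x)$, $x\in X$, is uniformly $UV^*$. Then for every continuous function $\varepsilon:X\to(0,+\infty)$ there exist a sequence $\mathscr{U}_n$, $n<\omega$, of open covers of $X$ and set-valued mappings $\Phi_n,\Psi_n:\mathscr{U}_n\rightrightarrows Y$ such that for every $n<\omega$ and every $U\in\mathscr{U}_n$: (i) $\Phi_n(U)\hookrightarrow_*\Psi_n(U)\subset \mathbf{O}_{\varepsilon(p)}(\varphi(p))$ for every $p\in U$; (ii) $\Psi_k(V)\subset\Phi_n(U)$ whenever $k>n$ and $V\in\mathscr{U}_k$ with $V\cap U\neq\emptyset$.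
   Context: All covers consist of nonempty sets. A set-valued mapping $\varphi:X\rightrightarrows Y$ assigns to each $x\in X$ a nonempty subset $\varphi(x)\subset Y$. For a metric space $(Y,\rho)$, $\mathbf{O}_\varepsilon(y)$ is the open $\varepsilon$-ball about $y$ and $\mathbf{O}_\varepsilon(S)=\bigcup_{q\in S}\mathbf{O}_\varepsilon(q)$ for $S\subset Y$. A mapping $\varphi:X\rightrightarrows Y$ is $\rho$-continuous if for every $\varepsilon>0$ each $x\in X$ has a neighbourhood $V$ with $\varphi(x)\subset\mathbf{O}_\varepsilon(\varphi(p))$ and $\varphi(p)\subset\mathbf{O}_\varepsilon(\varphi(x))$ for all $p\in V$. An embedding relation $\hookrightarrow_*$ on subsets of $Y$ is a relation $S\hookrightarrow_* T$ between subsets with $S\hookrightarrow_*T$ implying $S\subset T$; it is monotone if $A\subset S\hookrightarrow_* T\subset B$ implies $A\hookrightarrow_* B$. A subset $S\subset Y$ is uniformly $UV^*$ if for every $\varepsilon>0$ there is $\delta>0$ with $\mathbf{O}_\delta(S)\hookrightarrow_*\mathbf{O}_\varepsilon(S)$. *)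

From Stdlib Require Import Reals List Classical.
Open Scope R_scope.

Record is_metric (Y : Type) (rho : Y -> Y -> R) : Prop := {
  metric_nonneg : forall x y, 0 <= rho x y;
  metric_eq0 : forall x y, rho x y = 0 <-> x = y;
  metric_sym : forall x y, rho x y = rho y x;
  metric_tri : forall x y z, rho x z <= rho x y + rho y z
}.

Definition ball {Y : Type} (rho : Y -> Y -> R) (eps : R) (y : Y) : Y -> Prop :=
  fun z => rho y z < eps.
Definition nbhd {Y : Type} (rho : Y -> Y -> R) (eps : R) (S : Y -> Prop) : Y -> Prop :=
  fun z => exists q, S q /\ ball rho eps q z.

Definition subset {T : Type} (A B : T -> Prop) : Prop := forall t, A t -> B t.
Definition nonempty {T : Type} (A : T -> Prop) : Prop := exists t, A t.
Definition meets {T : Type} (A B : T -> Prop) : Prop := exists t, A t /\ B t.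

Record is_topology (X : Type) (opn : (X -> Prop) -> Prop) : Prop := {
  top_full : opn (fun _ => True);
  top_inter : forall A B, opn A -> opn B -> opn (fun x => A x /\ B x);
  top_union : forall F : (X -> Prop) -> Prop,
      (forall A, F A -> opn A) -> opn (fun x => exists A, F A /\ A x)
}.

Definition hausdorff {X : Type} (opn : (X -> Prop) -> Prop) : Prop :=
  forall x y, x <> y -> exists A B, opn A /\ opn B /\ A x /\ B y /\
     (forall z, ~ (A z /\ B z)).

Definition covers {X : Type} (F : (X -> Prop) -> Prop) : Prop :=
  forall x, exists A, F A /\ A x.

Definition open_cover {X : Type} (opn : (X -> Prop) -> Prop)
  (F : (X -> Prop) -> Prop) : Prop :=
  (forall A, F A -> opn A /\ nonempty A) /\ covers F.

Definition refines {X : Type} (G F : (X -> Prop) -> Prop) : Prop :=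
  forall B, G B -> exists A, F A /\ subset B A.

Definition locally_finite {X : Type} (opn : (X -> Prop) -> Prop)
  (F : (X -> Prop) -> Prop) : Prop :=
  forall x, exists W, opn W /\ W x /\
    exists l : list (X -> Prop), forall A, F A -> meets W A -> In A l.

Definition paracompact {X : Type} (opn : (X -> Prop) -> Prop) : Prop :=
  hausdorff opn /\
  forall F, open_cover opn F ->
    exists G, open_cover opn G /\ refines G F /\ locally_finite opn G.

Definition continuous_real {X : Type} (opn : (X -> Prop) -> Prop) (f : X -> R) : Prop :=
  forall x eta, 0 < eta -> exists W, opn W /\ W x /\
    forall p, W p -> Rabs (f p - f x) < eta.

Definition rho_continuous {X Y : Type} (opn : (X -> Prop) -> Prop)
  (rho : Y -> Y -> R) (phi : X -> Y -> Prop) : Prop :=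
  forall eps, 0 < eps -> forall x, exists V, opn V /\ V x /\
    forall p, V p -> subset (phi x) (nbhd rho eps (phi p)) /\
                     subset (phi p) (nbhd rho eps (phi x)).

Definition embedding_relation {Y : Type} (emb : (Y -> Prop) -> (Y -> Prop) -> Prop) : Prop :=
  forall S T, emb S T -> subset S T.

Definition monotone_emb {Y : Type} (emb : (Y -> Prop) -> (Y -> Prop) -> Prop) : Prop :=
  forall A S T B, subset A S -> emb S T -> subset T B -> emb A B.

Definition uniformly_UV {Y : Type} (rho : Y -> Y -> R)
  (emb : (Y -> Prop) -> (Y -> Prop) -> Prop) (S : Y -> Prop) : Prop :=
  forall eps, 0 < eps -> exists delta, 0 < delta /\
    emb (nbhd rho delta S) (nbhd rho eps S).

From Stdlib Require Import Reals List Classical.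
From Stdlib Require Import ClassicalEpsilon Lra.
Open Scope R_scope.

(* Besides (i) and (ii), the n-th
   stage keeps a uniform margin: some O_r(φ(z)), z ∈ U, lies inside Φ_n(U).
   By local finiteness these margins combine, near every point x, into a
   single radius m for all earlier stages, and then ρ-continuity of φ and the
   UV* property of φ(x) give a pair O_δ(φ(x)) ↪ O_{m/2}(φ(x)) on a small
   neighbourhood of x which fits inside every earlier Φ_k(U) met there.
   Paracompactness turns these local pairs into the next stage. *)

Lemma choice_on {A B : Type} (P : A -> Prop) (Q : A -> B -> Prop) :
  inhabited B -> (forall a, P a -> exists b, Q a b) ->
  exists f : A -> B, forall a, P a -> Q a (f a).
Proof.
  intros inhB HQ. exists (fun a => epsilon inhB (Q a)).
  intros a Pa. apply epsilon_spec. auto.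
Qed.

Lemma positive_radius_on_list {T : Type} (P : T -> R -> Prop) :
  (forall t r r', 0 < r' <= r -> P t r -> P t r') ->
  forall l, (forall t, In t l -> exists r, 0 < r /\ P t r) ->
  exists m, 0 < m /\ forall t, In t l -> P t m.
Proof.
  intros Hanti l. induction l as [|t l IH]; intros Hl.
  - exists 1. split; [lra | intros t []].
  - destruct (Hl t (or_introl eq_refl)) as [r [Hr Hrt]].
    destruct IH as [m [Hm Hml]]; [intros u Hu; apply Hl; right; exact Hu|].
    exists (Rmin r m). split; [apply Rmin_glb_lt; assumption|].
    intros u [<- | Hu].
    + apply (Hanti t r); [split; [apply Rmin_glb_lt|apply Rmin_l]; assumption|exact Hrt].
    + apply (Hanti u m); [split; [apply Rmin_glb_lt|apply Rmin_r]; assumption|auto].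
Qed.

Section NeighbourhoodCalculus.

Context {Y : Type} (rho : Y -> Y -> R).
Hypothesis Hrho : is_metric Y rho.

Lemma nbhd_mono r r' S : r <= r' -> subset (nbhd rho r S) (nbhd rho r' S).
Proof. intros H y [q [Hq Hqy]]. exists q. split; [exact Hq|]. unfold ball in *. lra. Qed.

Lemma nbhd_nonempty r S : 0 < r -> nonempty S -> nonempty (nbhd rho r S).
Proof.
  intros Hr [q Hq]. exists q, q. split; [exact Hq|]. unfold ball.
  rewrite (proj2 (metric_eq0 _ _ Hrho q q) eq_refl). exact Hr.
Qed.

Lemma nbhd_subset_nbhd e r A B :
  subset A (nbhd rho e B) -> subset (nbhd rho r A) (nbhd rho (e + r) B).
Proof.
  intros HAB y [q [Hq Hqy]]. destruct (HAB q Hq) as [q' [Hq' Hq'q]].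
  exists q'. split; [exact Hq'|]. unfold ball in *.
  pose proof (metric_tri _ _ Hrho q' q y). lra.
Qed.

End NeighbourhoodCalculus.

Record stage (X Y : Type) := {
  stage_cover : (X -> Prop) -> Prop;
  stage_Phi : (X -> Prop) -> (Y -> Prop);
  stage_Psi : (X -> Prop) -> (Y -> Prop)
}.
Arguments stage_cover {X Y}.
Arguments stage_Phi {X Y}.
Arguments stage_Psi {X Y}.

(* A constraint D relates each member U of an earlier cover to its set Φ(U). *)
Definition constraint (X Y : Type) := (X -> Prop) -> (Y -> Prop) -> Prop.

Definition extend {X Y : Type} (D : constraint X Y) (s : stage X Y) : constraint X Y :=
  fun U S => D U S \/ (stage_cover s U /\ S = stage_Phi s U).

Fixpoint history {X Y : Type} (s : nat -> stage X Y) (k : nat) : constraint X Y :=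
  match k with
  | O => fun _ _ => False
  | S k => extend (history s k) (s k)
  end.

Lemma history_contains {X Y : Type} (s : nat -> stage X Y) n k U :
  (n < k)%nat -> stage_cover (s n) U -> history s k U (stage_Phi (s n) U).
Proof.
  intros Hnk HU. induction Hnk as [|k _ IH].
  - right. split; [exact HU | reflexivity].
  - left. exact IH.
Qed.

Section Construction.

Variables (Y : Type) (rho : Y -> Y -> R) (emb : (Y -> Prop) -> (Y -> Prop) -> Prop).
Variables (X : Type) (opn : (X -> Prop) -> Prop).
Variables (phi : X -> Y -> Prop) (eps : X -> R).

Hypothesis Hrho : is_metric Y rho.
Hypothesis Htop : is_topology X opn.
Hypothesis Hpara : paracompact opn.
Hypothesis Hphi_ne : forall x, nonempty (phi x).
Hypothesis Hphi_cont : rho_continuous opn rho phi.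
Hypothesis Hphi_UV : forall x, uniformly_UV rho emb (phi x).
Hypothesis Heps_pos : forall x, 0 < eps x.
Hypothesis Heps_cont : continuous_real opn eps.

Definition locally_engulfing (D : constraint X Y) : Prop :=
  forall x, exists W, opn W /\ W x /\ exists m, 0 < m /\
    forall U S z, D U S -> W z -> U z -> subset (nbhd rho m (phi z)) S.

Definition good_pair (D : constraint X Y) (O : X -> Prop) (Ph Ps : Y -> Prop) : Prop :=
  nonempty Ph /\ nonempty Ps /\ emb Ph Ps /\
  (forall p, O p -> subset Ps (nbhd rho (eps p) (phi p))) /\
  (exists r, 0 < r /\ forall z, O z -> subset (nbhd rho r (phi z)) Ph) /\
  (forall U S, D U S -> meets O U -> subset Ps S).

Definition is_stage (D : constraint X Y) (s : stage X Y) : Prop :=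
  open_cover opn (stage_cover s) /\ locally_finite opn (stage_cover s) /\
  forall U, stage_cover s U -> good_pair D U (stage_Phi s U) (stage_Psi s U).

Lemma good_pair_shrink D O O' Ph Ps :
  subset O' O -> good_pair D O Ph Ps -> good_pair D O' Ph Ps.
Proof.
  intros HO [Hne1 [Hne2 [Hemb [Heps [[r [Hr Hin]] Hmeet]]]]].
  repeat split; auto.
  - exists r. split; auto.
  - intros U S HUS [t [Ht HUt]]. apply (Hmeet U S HUS). exists t; auto.
Qed.

Lemma good_pair_local D :
  locally_engulfing D -> forall x, exists O, opn O /\ O x /\ exists Ph Ps, good_pair D O Ph Ps.
Proof.
  intros HD x.
  destruct (HD x) as [W1 [HW1 [HxW1 [m1 [Hm1 Hengulf]]]]].
  pose proof (Heps_pos x) as Hex.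
  destruct (Heps_cont x (eps x / 2)) as [W2 [HW2 [HxW2 Heps_near]]]; [lra|].
  set (m := Rmin m1 (eps x / 2)).
  assert (Hm : 0 < m) by (apply Rmin_glb_lt; lra).
  assert (Hmm1 : m <= m1) by apply Rmin_l.
  assert (Hmeps : m <= eps x / 2) by apply Rmin_r.
  destruct (Hphi_UV x (m / 2)) as [a [Ha Hemb]]; [lra|].
  (* η is small enough to pass between φ(x) and φ(z) while keeping all three margins *)
  set (eta := Rmin a (m / 2) / 2).
  assert (Heta_a : eta <= a / 2) by (pose proof (Rmin_l a (m / 2)); unfold eta; lra).
  assert (Heta_m : eta <= m / 4) by (pose proof (Rmin_r a (m / 2)); unfold eta; lra).
  assert (Heta : 0 < eta) by (pose proof (Rmin_glb_lt a (m / 2) 0 Ha ltac:(lra)); unfold eta; lra).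
  destruct (Hphi_cont eta Heta x) as [W3 [HW3 [HxW3 Hclose]]].
  exists (fun z => (W1 z /\ W2 z) /\ W3 z).
  split; [repeat apply (top_inter _ _ Htop); assumption|].
  split; [tauto|].
  exists (nbhd rho a (phi x)), (nbhd rho (m / 2) (phi x)).
  split; [apply nbhd_nonempty; auto|].
  split; [apply nbhd_nonempty; auto; lra|].
  split; [exact Hemb|].
  split; [|split].
  - intros p [[_ Hp2] Hp3].
    pose proof (Heps_near p Hp2) as Hp. apply Rabs_def2 in Hp.
    intros y Hy. apply (nbhd_mono _ (eta + m / 2)); [lra|].
    apply (nbhd_subset_nbhd _ Hrho _ _ _ _ (proj1 (Hclose p Hp3))); exact Hy.
  - exists (a - eta). split; [lra|]. intros z [_ Hz3] y Hy.
    apply (nbhd_mono _ (eta + (a - eta))); [lra|].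
    apply (nbhd_subset_nbhd _ Hrho _ _ _ _ (proj2 (Hclose z Hz3))); exact Hy.
  - intros U S HUS [z [[[Hz1 _] Hz3] HUz]] y Hy.
    apply (Hengulf U S z HUS Hz1 HUz).
    apply (nbhd_mono _ (eta + m / 2)); [lra|].
    apply (nbhd_subset_nbhd _ Hrho _ _ _ _ (proj1 (Hclose z Hz3))); exact Hy.
Qed.

Lemma stage_exists D : locally_engulfing D -> exists s, is_stage D s.
Proof.
  intros HD.
  set (F := fun O => opn O /\ nonempty O /\ exists Ph Ps, good_pair D O Ph Ps).
  assert (HF : open_cover opn F).
  { split.
    - intros O [HO [Hne _]]. auto.
    - intro x. destruct (good_pair_local D HD x) as [O [HO [HxO Hpair]]].
      exists O. repeat split; auto. exists x; exact HxO. }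
  destruct (proj2 Hpara F HF) as [G [HG [Href Hlf]]].
  destruct (choice_on G (fun B p => good_pair D B (fst p) (snd p))) as [f Hf].
  { constructor. exact (fun _ => False, fun _ => False). }
  { intros B HB. destruct (Href B HB) as [O [[_ [_ [Ph [Ps Hpair]]]] HBO]].
    exists (Ph, Ps). exact (good_pair_shrink D O B Ph Ps HBO Hpair). }
  exists {| stage_cover := G; stage_Phi := fun B => fst (f B);
            stage_Psi := fun B => snd (f B) |}.
  split; [exact HG | split; [exact Hlf | exact Hf]].
Qed.

Lemma locally_engulfing_empty : locally_engulfing (fun _ _ => False).
Proof.
  intro x. exists (fun _ => True).
  split; [exact (top_full _ _ Htop)|]. split; [exact I|].
  exists 1. split; [lra | intros U S z []].
Qed.

(* Only finitely many members of the new cover meet a neighbourhood of x, so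
   the minimum of their margins is a positive radius. *)
Lemma locally_engulfing_extend D s :
  locally_engulfing D -> is_stage D s -> locally_engulfing (extend D s).
Proof.
  intros HD [_ [Hlf Hgood]] x.
  destruct (HD x) as [W1 [HW1 [HxW1 [m1 [Hm1 Hengulf]]]]].
  destruct (Hlf x) as [W2 [HW2 [HxW2 [l Hl]]]].
  destruct (positive_radius_on_list
      (fun A r => stage_cover s A -> forall z, A z ->
                  subset (nbhd rho r (phi z)) (stage_Phi s A))) with (l := l)
    as [m2 [Hm2 Hmargin]].
  { intros A r r' [_ Hr'r] HAr HA z Hz y Hy.
    apply (HAr HA z Hz). revert Hy. apply nbhd_mono. exact Hr'r. }
  { intros A _. destruct (classic (stage_cover s A)) as [HA|HA].
    - destruct (Hgood A HA) as [_ [_ [_ [_ [[r [Hr Hin]] _]]]]].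
      exists r. split; [exact Hr | intros _; exact Hin].
    - exists 1. split; [lra | intros HA'; contradiction]. }
  exists (fun z => W1 z /\ W2 z).
  split; [apply (top_inter _ _ Htop); assumption|]. split; [tauto|].
  exists (Rmin m1 m2). split; [apply Rmin_glb_lt; assumption|].
  intros U S z [HDUS | [HU ->]] [Hz1 Hz2] HUz y Hy.
  - apply (Hengulf U S z HDUS Hz1 HUz). revert Hy. apply nbhd_mono, Rmin_l.
  - apply (Hmargin U) with (z := z); auto.
    + apply Hl; [exact HU | exists z; auto].
    + revert Hy. apply nbhd_mono, Rmin_r.
Qed.

Lemma stages_exist : exists s : nat -> stage X Y, forall k, is_stage (history s k) (s k).
Proof.
  destruct (choice_on locally_engulfing is_stage) as [next Hnext].
  { constructor. exact {| stage_cover := fun _ => False;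
      stage_Phi := fun _ _ => False; stage_Psi := fun _ _ => False |}. }
  { exact stage_exists. }
  set (hist := fun k => Nat.iter k (fun D => extend D (next D)) (fun _ _ => False)).
  assert (Hhist : forall k, locally_engulfing (hist k)).
  { induction k as [|k IH].
    - exact locally_engulfing_empty.
    - apply locally_engulfing_extend; [exact IH | exact (Hnext _ IH)]. }
  exists (fun k => next (hist k)).
  assert (Hhistory : forall k, history (fun k => next (hist k)) k = hist k).
  { induction k as [|k IH]; [reflexivity | simpl; rewrite IH; reflexivity]. }
  intro k. rewrite Hhistory. exact (Hnext _ (Hhist k)).
Qed.

End Construction.

Theorem theorem2p1
  (Y : Type) (rho : Y -> Y -> R) (Hrho : is_metric Y rho)
  (emb : (Y -> Prop) -> (Y -> Prop) -> Prop)
  (Hemb : embedding_relation emb) (Hmon : monotone_emb emb)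
  (X : Type) (opn : (X -> Prop) -> Prop) (Htop : is_topology X opn)
  (Hpara : paracompact opn)
  (phi : X -> Y -> Prop) (Hphi_ne : forall x, nonempty (phi x))
  (Hphi_cont : rho_continuous opn rho phi)
  (Hphi_UV : forall x, uniformly_UV rho emb (phi x))
  (eps : X -> R) (Heps_pos : forall x, 0 < eps x)
  (Heps_cont : continuous_real opn eps) :
  exists (Cov : nat -> (X -> Prop) -> Prop)
         (Phi Psi : nat -> (X -> Prop) -> (Y -> Prop)),
    (forall n, open_cover opn (Cov n)) /\
    (forall n U, Cov n U -> nonempty (Phi n U) /\ nonempty (Psi n U)) /\
    (forall n U, Cov n U ->
        emb (Phi n U) (Psi n U) /\
        forall p, U p -> subset (Psi n U) (nbhd rho (eps p) (phi p))) /\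
    (forall n k U V, (n < k)%nat -> Cov n U -> Cov k V -> meets V U ->
        subset (Psi k V) (Phi n U)).
Proof.
  destruct (stages_exist Y rho emb X opn phi eps Hrho Htop Hpara Hphi_ne Hphi_cont
              Hphi_UV Heps_pos Heps_cont) as [s Hs].
  exists (fun n => stage_cover (s n)), (fun n => stage_Phi (s n)),
         (fun n => stage_Psi (s n)).
  split; [intro n; exact (proj1 (Hs n))|].
  split; [|split].
  - intros n U HU. destruct (proj2 (proj2 (Hs n)) U HU) as [Hne1 [Hne2 _]]. auto.
  - intros n U HU. destruct (proj2 (proj2 (Hs n)) U HU) as [_ [_ [Hemb' [Heps _]]]]. auto.
  - intros n k U V Hnk HU HV HVU.
    destruct (proj2 (proj2 (Hs k)) V HV) as [_ [_ [_ [_ [_ Hmeet]]]]].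
    exact (Hmeet U _ (history_contains s n k U Hnk HU) HVU).
Qed.
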